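(* Let $\sigma$ be an admissible permutation on $\mathbb{Z}$ and $r=(\ldots,r_{-1},r_0,r_1,\ldots)$ be its standard record representation. For any $n\in\mathbb{N}$, let $\sigma_n=(\sigma(-n),\ldots,\sigma(n-1),\sigma(n))$ be the restriction of $\sigma$ to $\llbracket -n,n\rrbracket$ and let $s_n$ be the number of records of $\sigma_n$ smaller or equal than $0$. Then, for any finite $I\subseteq\mathbb{Z}$, there exists $n_0$ such that, for all $n\geq n_0$ we have \begin{align*} \mathrm{RBST}(\sigma)\cap\left(\bigcup_{k\in I}\mathbf{1}^k\mathbb{T}_L\right)=\mathbf{1}^{-s_n}\mathrm{BST}(\sigma_n)\cap\left(\bigcup_{k\in I}\mathbf{1}^k\mathbb{T}_L\right)\,. \end{align*} In words, the redwood tree $\mathrm{RBST}(\sigma)$ and the shifted binary search tree $\mathbf{1}^{-s_n}\mathrm{BST}(\sigma_n)$ are locally equal for $n$ large enough.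
   Context: Notation: $\mathbb{T}=\{\emptyset\}\cup\bigcup_{k\geq1}\{\mathbf{0},\mathbf{1}\}^k$ is the infinite binary tree seen as words on $\{\mathbf{0},\mathbf{1}\}$ ($\emptyset$ = root = empty word); binary trees are prefix-closed subsets of $\mathbb{T}$. For a finite sequence $x=(x_1,\ldots,x_n)$ of distinct values, its binary search tree is $\mathrm{BST}(x)=\emptyset$ if $n=0$, and otherwise $\mathrm{BST}(x)=\{\emptyset\}\cup\mathbf{0}\,\mathrm{BST}(x_-)\cup\mathbf{1}\,\mathrm{BST}(x_+)$, where $x_-$ (resp. $x_+$) is the subsequence of values smaller (resp. larger) than $x_1$, in the same order. A new letter $\Upsilon$ is added as the inverse of $\mathbf{1}$, with the convention $\mathbf{1}^k=\Upsilon^{|k|}$ for $k<0$ and $\mathbf{1}^0=\emptyset$ (so $\mathbf{1}^a\mathbf{1}^b=\mathbf{1}^{a+b}$ for $a,b\in\mathbb{Z}$); $\mathbb{T}_L:=\{\emptyset\}\cup\mathbf{0}\mathbb{T}$ and $\mathbb{Y}:=\bigcup_{k\in\mathbb{Z}}\mathbf{1}^k\mathbb{T}_L$. For $a,b\in\mathbb{Z}$, $\llbracket a,b\rrbracket=\{a,a+1,\ldots,b\}$. A permutation $\sigma$ of $\mathbb{Z}$ is admissible if $|\{i\in\mathbb{N}:\sigma(i)\notin\mathbb{N}\}|+|\{i\in\mathbb{Z}\setminus\mathbb{N}:\sigma(i)\in\mathbb{N}\}|<\infty$. A record index of $\sigma$ is an index $r$ such that $\sigma(r)>\sigma(k)$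 for all $k<r$ ($\sigma(r)$ is then a record); for an admissible $\sigma$ the set of record indices is infinite in both directions. The standard record representation of $\sigma$ is the sequence $(\ldots,r_{-1},r_0,r_1,\ldots)$ listing all record indices of $\sigma$ in strictly increasing order, indexed so that $\sigma(r_0)\leq0<\sigma(r_1)$. For $k\in\mathbb{Z}$, $\sigma[k]=(\sigma(i):\sigma(r_k)<\sigma(i)<\sigma(r_{k+1}))$ is the sequence of images between two consecutive records, in the same order as in $\sigma$. The redwood tree of $\sigma$ is $\mathrm{RBST}(\sigma):=\bigcup_{k\in\mathbb{Z}}\{\mathbf{1}^k\}\cup\mathbf{1}^k\mathbf{0}\,\mathrm{BST}(\sigma[k])\subseteq\mathbb{Y}$. *)

From mathcomp Require Import all_boot all_order all_algebra.
Set Implicit Arguments. Unset Strict Implicit. Unset Printing Implicit Defensive.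
Import Order.TTheory GRing.Theory Num.Theory.
Local Open Scope ring_scope.

(* Binary trees are sets of words over {0,1}; a word is a [seq bool] with
   [false] = letter 0 and [true] = letter 1; the root is the empty word. *)

Fixpoint in_bst (x : seq int) (w : seq bool) {struct w} : bool :=
  match x with
  | [::] => false
  | a :: t =>
    match w with
    | [::] => true
    | b :: w' =>
        in_bst (if b then [seq y <- t | a < y] else [seq y <- t | y < a]) w'
    end
  end.

(* Elements of Y = U_{k in Z} 1^k T_L in normal form: (k, None) stands for the
   word 1^k, and (k, Some w) stands for the word 1^k 0 w (k in Z, w in T). *)
Definition Yword := (int * option (seq bool))%type.

Definition yword (k : nat) (o : option (seq bool)) : seq bool :=
  nseq k true ++ (match o with None => [::] | Some w => false :: w end).

Definition admissible (sigma : int -> int) : Prop :=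
  exists s : seq int, forall i : int,
    ((0 <= i) && (sigma i < 0)) || ((i < 0) && (0 <= sigma i)) -> i \in s.

Definition is_record_index (sigma : int -> int) (r : int) : Prop :=
  forall k : int, k < r -> sigma k < sigma r.

Definition std_record_rep (sigma : int -> int) (r : int -> int) : Prop :=
  (forall k : int, r k < r (k + 1)) /\
  (forall k : int, is_record_index sigma (r k)) /\
  (forall i : int, is_record_index sigma i -> exists k : int, r k = i) /\
  sigma (r 0) <= 0 < sigma (r 1).

Definition values_between (sigma : int -> int) (lo hi : int) (xs : seq int)
  : Prop :=
  exists idx : seq int,
    sorted (fun a b : int => a < b) idx /\
    (forall i : int, (i \in idx) = (lo < sigma i < hi)) /\
    xs = map sigma idx.

Definition sigma_block (sigma r : int -> int) (k : int) (xs : seq int) : Prop :=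
  values_between sigma (sigma (r k)) (sigma (r (k + 1))) xs.

Definition RBST (sigma r : int -> int) (y : Yword) : Prop :=
  match y.2 with
  | None => True
  | Some w => exists xs, sigma_block sigma r y.1 xs /\ in_bst xs w
  end.

Definition restr (sigma : int -> int) (n : nat) : seq int :=
  [seq sigma (i%:Z - n%:Z) | i <- iota 0 (2 * n + 1)].

Definition nb_records_le0 (x : seq int) : nat :=
  count (fun j => all (fun y => y < nth 0 x j) (take j x) && (nth 0 x j <= 0))
        (iota 0 (size x)).

(* The subset 1^(-s) BST(x) of Y: y is in it iff 1^s y is a word of T lying
   in BST(x). *)
Definition shifted_BST (s : nat) (x : seq int) (y : Yword) : Prop :=
  (0 <= y.1 + s%:Z) /\ in_bst x (yword (absz (y.1 + s%:Z)) y.2).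

From mathcomp Require Import zify.
From mathcomp Require Import all_boot all_order all_algebra.
Set Implicit Arguments. Unset Strict Implicit. Unset Printing Implicit Defensive.
Import Order.TTheory GRing.Theory Num.Theory.
Local Open Scope ring_scope.

(* Following the word 1^m from the root of BST(x) walks down the records of x,
   so 1^m ends at the record c of x with exactly m records <= c, whose subtree
   is BST of the entries > c.  The records of sigma_n are, for n large, the
   records of sigma lying in the window [-n, n]; counting them shows that
   m = s_n + k reaches sigma(r_k).  Its right child is the next record
   sigma(r_(k+1)), whose left subtree is BST of the values strictly between
   sigma(r_k) and sigma(r_(k+1)); for n large all of them occur in sigma_n,
   so this is BST(sigma[k]). *)

Definition above (b : option int) (a : int) : bool :=
  if b is Some c then c < a else true.

Fixpoint records_above (b : option int) (x : seq int) : seq int :=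
  match x with
  | [::] => [::]
  | a :: t => if above b a then a :: records_above (Some a) t
              else records_above b t
  end.

Definition records (x : seq int) : seq int := records_above None x.

Lemma mem_records_above b x : {subset records_above b x <= x}.
Proof.
elim: x b => [|a t IH] b //= v.
case: ifP => _; rewrite ?inE; last by move/IH ->; rewrite orbT.
by case/orP => [->|/IH ->]; rewrite ?orbT.
Qed.

Lemma all_above_records_above b x : all (above b) (records_above b x).
Proof.
elim: x b => [|a t IH] b //=; case: ifP => [ba|_]; last exact: IH.
rewrite /= ba; apply/allP => v /(allP (IH (Some a))) /= av.
by case: b ba => [c|] //= ca; apply: lt_trans av.
Qed.

Lemma sorted_records_above b x : sorted <%R (records_above b x).
Proof.
elim: x b => [|a t IH] b //=; case: ifP => _ //=.
rewrite (path_sortedE lt_trans) IH andbT.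
exact: (all_above_records_above (Some a)).
Qed.

Lemma records_uniq x : uniq (records x).
Proof. exact/lt_sorted_uniq/sorted_records_above. Qed.

Lemma records_above_filter_gt (a u : int) t : a < u ->
  records_above (Some u) [seq y <- t | a < y] = records_above (Some u) t.
Proof.
elim: t u => [|v t IH] u au //=.
case: ifP => av /=; first by case: ifP => uv; rewrite IH.
rewrite IH // ifN //; apply/negP => uv.
by rewrite (lt_trans au uv) in av.
Qed.

Lemma records_above_filter (a : int) t :
  records_above (Some a) t = records [seq y <- t | a < y].
Proof.
elim: t => [|v t IH] //=; case: ifP => av //.
by rewrite /records /= records_above_filter_gt.
Qed.

Lemma records_cons a t : records (a :: t) = a :: records [seq y <- t | a < y].
Proof. by rewrite /records /= records_above_filter. Qed.

(* [p] is the part of the sequence already read, whose maximum is [b]. *)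
Lemma count_records_prefix (P : pred int) (x p : seq int) (b : option int) :
  (forall v, all (fun y => y < v) p = above b v) ->
  count (fun j => all (fun y => y < nth 0 x j) (p ++ take j x) && P (nth 0 x j))
        (iota 0 (size x))
  = count P (records_above b x).
Proof.
elim: x p b => [|a t IH] p b p_max //=.
rewrite -(addn0 1%N) iotaDl count_map cats0 p_max.
have pa_max v : all (fun y => y < v) (rcons p a)
                = above (if above b a then Some a else b) v.
  rewrite all_rcons p_max; case: b {p_max} => [c|] /=; last by rewrite andbT.
  case: (ltP c a) => [ca|ac] /=.
    by apply/andP/idP => [[]//|av]; rewrite av (lt_trans ca av).
  by apply/andP/idP => [[]//|cv]; rewrite cv (le_lt_trans ac cv).
rewrite (eq_count (a2 := fun j =>
  all (fun y => y < nth 0 t j) (rcons p a ++ take j t) && P (nth 0 t j))).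
  by rewrite (IH _ _ pa_max); case: (above b a).
by move=> j; rewrite /= cat_rcons.
Qed.

Lemma nb_records_le0E x : nb_records_le0 x = count (fun v => v <= 0) (records x).
Proof. by rewrite /nb_records_le0 -(@count_records_prefix _ x [::] None). Qed.

Lemma mem_records_above_map (f : int -> int) (J : seq int) (b : option int) v :
  sorted <%R J ->
  (v \in records_above b (map f J)) <->
  (exists i, [/\ i \in J, v = f i, above b (f i) &
              forall j, j \in J -> j < i -> f j < f i]).
Proof.
elim: J b v => [|a J IH] b v /=; first by move=> _; split => // -[i []].
rewrite path_sortedE; last exact: lt_trans.
case/andP => /allP a_min sJ; have {}IH b' v' := IH b' v' sJ.
case: ifP => ba; rewrite ?inE; split.
- case/orP => [/eqP -> | /IH [i [iJ -> bi i_rec]]].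
    exists a; split; rewrite ?mem_head // => j; rewrite inE.
    case/predU1P => [->|/a_min aj ja]; first by rewrite ltxx.
    by have := lt_trans aj ja; rewrite ltxx.
  exists i; split; rewrite ?inE ?iJ ?orbT //.
    by case: b ba {IH} => [c|] //= ca; apply: lt_trans bi.
  by move=> j; case/predU1P => [->|]; [|exact: i_rec].
- case=> i [+ -> + i_rec]; case/predU1P => [-> | iJ _]; first by rewrite eqxx.
  apply/orP; right; apply/IH; exists i; split => //.
    by apply: i_rec; rewrite ?mem_head ?a_min.
  by move=> j jJ; apply: i_rec; rewrite inE jJ orbT.
- move=> /IH [i [iJ -> bi i_rec]]; exists i; split; rewrite ?inE ?iJ ?orbT //.
  move=> j; case/predU1P => [-> _|]; last exact: i_rec.
  by case: b ba bi {IH} => [c|] //= /negbT; rewrite -leNgt => /le_lt_trans; apply.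
- case=> i [+ -> bi i_rec]; case/predU1P => [ia | iJ]; first by rewrite -ia bi in ba.
  by apply/IH; exists i; split => // j jJ; apply: i_rec; rewrite inE jJ orbT.
Qed.

Lemma bst_right_spine (x : seq int) (c : int) (w : seq bool) : c \in records x ->
  in_bst x (nseq (count (fun v => v <= c) (records x)) true ++ w)
  = in_bst [seq y <- x | c < y] w.
Proof.
move: {2}(size x) (leqnn (size x)) => N; elim: N x => [|N IH] [|a t] //.
rewrite records_cons /= ltnS inE => size_t /predU1P[->|c_rec].
  rewrite lexx ltxx (eq_in_count (a2 := pred0)) ?count_pred0 // => v.
  by move/mem_records_above; rewrite mem_filter /= => /andP[av _]; rewrite leNgt av.
have ac : a < c by have := mem_records_above c_rec; rewrite mem_filter => /andP[].
rewrite (ltW ac) add1n /= IH ?size_filter ?(leq_trans (count_size _ _)) //.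
rewrite -filter_predI ltNge (ltW ac) /=; congr in_bst; apply: eq_filter => y /=.
by apply/andP/idP => [[]|cy]; last by rewrite (lt_trans ac cy).
Qed.

Lemma ywordE m o : yword m o = nseq m true ++ yword 0 o.
Proof. by []. Qed.

Lemma lt_sorted_min_cons (s : seq int) (a : int) :
  sorted <%R s -> a \in s -> {in s, forall x, a <= x} ->
  s = a :: [seq x <- s | a < x].
Proof.
case: s => [|b t] //= sbt abt a_min.
have /andP[/allP b_min _] : all (fun x => b < x) t && sorted <%R t.
  by rewrite -path_sortedE //; exact: lt_trans.
have ab : a = b.
  case/predU1P: abt => // /b_min ba.
  by have := a_min b (mem_head b t); rewrite leNgt ba.
by rewrite -ab ltxx; congr (_ :: _); apply/esym/all_filterP/allP; rewrite ab.
Qed.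

Lemma values_between_unique sigma lo hi xs ys :
  values_between sigma lo hi xs -> values_between sigma lo hi ys -> xs = ys.
Proof.
move=> [I [sI [memI ->]]] [J [sJ [memJ ->]]]; congr map.
by apply: lt_sorted_eq => // i; rewrite memI memJ.
Qed.

Lemma count_le_split (s : seq int) (lo hi : int) : lo <= hi ->
  count (fun v => v <= hi) s
  = addn (count (fun v => v <= lo) s) (count (fun v => lo < v <= hi) s).
Proof.
move=> lohi; elim: s => [|v s IH] //=; rewrite IH.
by case: (leP v lo) => vlo; case: (leP v hi) => vhi /=; lia.
Qed.

Definition window (n : nat) : seq int :=
  [seq i%:Z - n%:Z | i <- iota 0 (2 * n + 1)].

Lemma restrE sigma n : restr sigma n = map sigma (window n).
Proof. by rewrite /restr /window -map_comp. Qed.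

Lemma window_sorted n : sorted <%R (window n).
Proof.
rewrite /window sorted_map.
by apply: sub_sorted (iota_ltn_sorted 0 _) => i j /=; rewrite ltrD2r ltz_nat.
Qed.

Lemma mem_window n i : (i \in window n) = (`|i| <= n)%N.
Proof.
apply/mapP/idP => [[m]|i_le]; first by rewrite mem_iota => /andP[_ ?] ->; lia.
by exists (absz (i + n%:Z)); [rewrite mem_iota|]; lia.
Qed.

Lemma sub_window_bigmax (S : seq int) n :
  (\max_(i <- S) `|i| <= n)%N -> {subset S <= window n}.
Proof.
by move=> le_n i iS; rewrite mem_window (leq_trans _ le_n) // leq_bigmax_seq.
Qed.

Section RecordRepresentation.

Variables sigma r : int -> int.
Hypothesis std : std_record_rep sigma r.

Local Notation rec n := (records (map sigma (window n))).
Local Notation count_le c n := (count (fun v => v <= c) (rec n)).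

Lemma record_index_homo : {homo r : k l / k < l}.
Proof.
have [r_incr _] := std.
suff r_add (k : int) (d : nat) : r k < r (k + d.+1%:Z).
  by move=> k l kl; have -> : l = k + (`|l - k| - 1)%N.+1%:Z by lia.
elim: d => [|d IH]; first exact: r_incr.
apply: lt_trans IH _; have -> : k + d.+2%:Z = k + d.+1%:Z + 1 by lia.
exact: r_incr.
Qed.

Lemma record_index_mono : {mono r : k l / k <= l}.
Proof. exact: le_mono record_index_homo. Qed.

Lemma record_next_le k j : sigma (r k) < sigma j -> r (k + 1) <= j.
Proof.
have [_ [is_rec [rec_r _]]] := std.
have le_rk i : i <= r k -> sigma i <= sigma (r k).
  by rewrite le_eqVlt => /predU1P[->|/is_rec/ltW].
suff below (d : nat) i : i <= r k + d%:Z -> i < r (k + 1) -> sigma i <= sigma (r k).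
  move=> lt_j; rewrite leNgt; apply/negP => jr.
  have le_j : j <= r k + `|j - r k|%:Z by lia.
  by have := below _ j le_j jr; rewrite leNgt lt_j.
elim: d i => [|d IH] i i_le i_lt; first by apply: le_rk; rewrite addr0 in i_le.
have [le_i|gt_i] := leP i (r k + d%:Z); first exact: IH.
rewrite leNgt; apply/negP => gt_si.
(* the first value above sigma(r k) after index r k would be a record *)
have [m rm] : exists m, r m = i.
  apply: rec_r => i' lt_i'; apply: le_lt_trans gt_si; apply: IH; lia.
have rk_i : r k < i by lia.
suff : k < m < k + 1 by lia.
rewrite !ltNge -(record_index_mono m k) -(record_index_mono (k + 1) m) rm.
by rewrite -!ltNge rk_i.
Qed.

Lemma record_value_in_window n k : r k \in window n -> sigma (r k) \in rec n.
Proof.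
move=> rW; apply/mem_records_above_map; first exact: window_sorted.
by exists (r k); split => // j _; apply: std.2.1.
Qed.

Lemma window_record_between n k v : r (k + 1) \in window n -> v \in rec n ->
  sigma (r k) < v <= sigma (r (k + 1)) -> v = sigma (r (k + 1)).
Proof.
move=> rW /(mem_records_above_map _ _ _ (window_sorted n)) [i [iW -> _ i_rec]].
case/andP => /record_next_le; rewrite le_eqVlt => /predU1P[<- //|lt_ri] le_i.
by have := i_rec _ rW lt_ri; rewrite ltNge le_i.
Qed.

Lemma count_records_succ n k : r (k + 1) \in window n ->
  count_le (sigma (r (k + 1))) n = (count_le (sigma (r k)) n).+1.
Proof.
move=> rW; have lt_rec : sigma (r k) < sigma (r (k + 1)).
  by apply: std.2.1; apply: std.1.
rewrite (count_le_split _ (ltW lt_rec)) -addn1; congr addn.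
have -> : count (fun v => sigma (r k) < v <= sigma (r (k + 1))) (rec n)
          = count_mem (sigma (r (k + 1))) (rec n).
  apply: eq_in_count => v v_rec /=; apply/idP/eqP => [|->].
    exact: window_record_between rW v_rec.
  by rewrite lt_rec lexx.
by rewrite count_uniq_mem ?records_uniq ?record_value_in_window.
Qed.

Lemma count_records_le0 n : r 1 \in window n ->
  count_le 0 n = count_le (sigma (r 0)) n.
Proof.
move=> r1W; have [_ [_ [_ /andP[r0_le0 r1_gt0]]]] := std.
rewrite (count_le_split _ r0_le0) -[RHS]addn0; congr addn.
rewrite -(count_pred0 (rec n)); apply: eq_in_count => v v_rec /=.
apply/negbTE/negP => /andP[lt_v le_v0].
have := @window_record_between n 0 v; rewrite add0r => /(_ r1W v_rec).
rewrite lt_v (le_trans le_v0 (ltW r1_gt0)) => /(_ isT) v_r1.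
by move: r1_gt0; rewrite -v_r1 ltNge le_v0.
Qed.

Lemma count_records_shift n k0 (d : nat) :
  (forall j, k0 < j <= k0 + d%:Z -> r j \in window n) ->
  count_le (sigma (r (k0 + d%:Z))) n
  = (count_le (sigma (r k0)) n + d)%N.
Proof.
elim: d => [|d IH] rW; first by rewrite addr0 addn0.
have -> : k0 + d.+1%:Z = k0 + d%:Z + 1 by lia.
by rewrite count_records_succ ?IH ?addnS // => [j ?|]; apply: rW; lia.
Qed.

Lemma count_records_index n k :
  (forall j, (`|j| <= `|k|.+1)%N -> r j \in window n) ->
  (count_le (sigma (r k)) n)%:Z = (count_le 0 n)%:Z + k.
Proof.
move=> rW.
have shift j : - `|k|%:Z <= j <= `|k|%:Z ->
    count_le (sigma (r j)) n
    = addn (count_le (sigma (r (- `|k|%:Z))) n) (absz (j + `|k|%:Z)).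
  move=> j_range; have := @count_records_shift n (- `|k|%:Z) (absz (j + `|k|%:Z)).
  have -> : - `|k|%:Z + (absz (j + `|k|%:Z))%:Z = j by lia.
  by apply => i ?; apply: rW; lia.
by rewrite count_records_le0 ?(shift k) ?(shift 0) ?rW //; lia.
Qed.

Lemma in_bst_window_above n k o :
  r (k + 1) \in window n ->
  (forall i, sigma (r k) < sigma i < sigma (r (k + 1)) -> i \in window n) ->
  in_bst [seq v <- map sigma (window n) | sigma (r k) < v] (yword 0 o)
  <-> RBST sigma r (k, o).
Proof.
move=> rW block_W.
set lo := sigma (r k); set hi := sigma (r (k + 1)).
rewrite filter_map; set J := filter _ (window n).
have J_sorted : sorted <%R J by apply/lt_sorted_filter/window_sorted.
have rJ : r (k + 1) \in J by rewrite mem_filter rW andbT; apply: std.2.1; apply: std.1.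
have J_min : {in J, forall i, r (k + 1) <= i}.
  by move=> i; rewrite mem_filter => /andP[/record_next_le].
rewrite (lt_sorted_min_cons J_sorted rJ J_min) /=.
case: o => [w|] /=; last by split.
rewrite filter_map /RBST /=.
set idx := [seq i <- _ | _].
have idx_between : values_between sigma lo hi (map sigma idx).
  exists idx; split; first by do 2 apply: lt_sorted_filter.
  split => // i; rewrite !mem_filter /=; apply/idP/idP => [/and4P[-> _ -> //]|].
  case/andP => lt_lo lt_hi; rewrite lt_hi lt_lo block_W ?lt_lo //= andbT.
  rewrite lt_neqAle record_next_le // andbT; apply/eqP => ri.
  by rewrite /hi ri ltxx in lt_hi.
split => [bst | [xs [xs_block bst]]]; first by exists (map sigma idx).
by rewrite (values_between_unique idx_between xs_block).
Qed.

Lemma redwood_window n k o :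
  (forall j, (`|j| <= `|k|.+1)%N -> r j \in window n) ->
  (forall i, sigma (r k) < sigma i < sigma (r (k + 1)) -> i \in window n) ->
  RBST sigma r (k, o)
  <-> shifted_BST (nb_records_le0 (restr sigma n)) (restr sigma n) (k, o).
Proof.
move=> rW block_W.
rewrite /shifted_BST /= restrE nb_records_le0E addrC -count_records_index //.
rewrite absz_nat ywordE bst_right_spine ?record_value_in_window ?rW //.
rewrite -(@in_bst_window_above n) ?rW //; last by lia.
by split => [bst|[]//]; split.
Qed.

End RecordRepresentation.

Theorem proposition2p5 (sigma : int -> int) (r : int -> int) :
  bijective sigma -> admissible sigma -> std_record_rep sigma r ->
  forall I : seq int,
  exists n0 : nat, forall n : nat, (n0 <= n)%N ->
    forall y : Yword, y.1 \in I ->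
      (RBST sigma r y <->
       shifted_BST (nb_records_le0 (restr sigma n)) (restr sigma n) y).
Proof.
(* admissibility only serves to make the record representation [r] exist *)
move=> [g sigmaK _] _ std I.
set B := (\max_(k <- I) `|k|)%N.
set M := (\max_(k <- I) (`|sigma (r k)| + `|sigma (r (k + 1)%R)|))%N.
set S := [seq r j | j <- window B.+1] ++ [seq g v | v <- window M].
exists (\max_(i <- S) `|i|)%N.
move=> n /sub_window_bigmax window_n [k o] /= kI.
apply: (redwood_window std) => [j j_le | i /andP[lt_i i_lt]]; apply: window_n.
  rewrite mem_cat map_f // mem_window (leq_trans j_le) // ltnS.
  exact: (leq_bigmax_seq k).
rewrite -[i]sigmaK mem_cat [_ \in map g _]map_f ?orbT // mem_window.
by apply: leq_trans (leq_bigmax_seq k kI isT); lia.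
Qed.
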